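(* Let $(\mathsf P,\mathcal O)$ be a semitopology and $p\in\mathsf P$. The following are equivalent: (1) $p$ is regular, i.e. $p\in K(p)$ and $K(p)$ is topen; (2) $K(p)$ is a greatest topen neighbourhood of $p$; (3) $K(p)$ is a maximal topen neighbourhood of $p$; (4) $p$ has a maximal topen neighbourhood; (5) $p$ has some topen neighbourhood (a topen set containing $p$).
   Context: A semitopology is a pair $(\mathsf P,\mathcal O)$ where $\mathsf P$ is a set and $\mathcal O\subseteq\mathcal P(\mathsf P)$ contains $\varnothing$ and $\mathsf P$ and is closed under arbitrary unions. Write $X\between Y$ when $X\cap Y\neq\varnothing$. A set $T$ is transitive when for all $O,O'\in\mathcal O$, $O\between T\between O'$ implies $O\between O'$; topen means nonempty, open and transitive. Points $p,p'$ are intertwined when every open set containing $p$ intersects every open set containing $p'$; $I(p)$ denotes the set of points intertwined with $p$. The interior $\mathrm{int}(R)$ of $R\subseteq\mathsf P$ is the union of all open sets contained in $R$. The community of $p$ is $K(p)=\mathrm{int}(I(p))$. A topen neighbourhood of $p$ is a topen set containing $p$. *)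

From Stdlib Require Import Classical.

Definition set (P : Type) := P -> Prop.

Definition subset {P} (X Y : set P) : Prop := forall x, X x -> Y x.

Definition set_eq {P} (X Y : set P) : Prop := forall x, X x <-> Y x.

Definition between {P} (X Y : set P) : Prop := exists x, X x /\ Y x.

Record semitopology (P : Type) := {
  opn : set P -> Prop;
  opn_empty : opn (fun _ => False);
  opn_full : opn (fun _ => True);
  opn_union : forall F : set P -> Prop,
      (forall O, F O -> opn O) ->
      opn (fun x => exists O, F O /\ O x)
}.
Arguments opn {P} _ _.

Section Defs.
Context {P : Type} (S : semitopology P).

Definition transitive (T : set P) : Prop :=
  forall O O' : set P, opn S O -> opn S O' ->
    between O T -> between T O' -> between O O'.

Definition topen (T : set P) : Prop :=
  (exists x, T x) /\ opn S T /\ transitive T.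

Definition intertwined (p p' : P) : Prop :=
  forall O O' : set P, opn S O -> opn S O' -> O p -> O' p' -> between O O'.

Definition I (p : P) : set P := fun p' => intertwined p p'.

Definition interior (R : set P) : set P :=
  fun x => exists O, opn S O /\ subset O R /\ O x.

Definition K (p : P) : set P := interior (I p).

Definition regular (p : P) : Prop := K p p /\ topen (K p).

Definition topen_nbhd (p : P) (T : set P) : Prop := topen T /\ T p.

Definition greatest_topen_nbhd (p : P) (T : set P) : Prop :=
  topen_nbhd p T /\ forall T', topen_nbhd p T' -> subset T' T.

Definition maximal_topen_nbhd (p : P) (T : set P) : Prop :=
  topen_nbhd p T /\ forall T', topen_nbhd p T' -> subset T T' -> set_eq T' T.
End Defs.

From Stdlib Require Import FunctionalExtensionality PropExtensionality.

(* The heart of the argument is that a single topen neighbourhood T of p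
   already forces K(p) to be the greatest topen neighbourhood of p:
   - every topen neighbourhood of p consists of points intertwined with p,
     and being open it lies in the interior K(p) of I(p);
   - K(p) is open, as the interior of a set;
   - every open set meeting K(p) meets T (its meeting point is intertwined
     with p, and T is an open set containing p), so K(p) inherits
     transitivity from T.
   The remaining implications are bookkeeping: a greatest topen
   neighbourhood is maximal, and a topen neighbourhood K(p) of p is exactly
   what regularity of p asserts. *)

Section Regularity.
Variables (P : Type) (S : semitopology P).

Lemma opn_set_eq (X Y : set P) : set_eq X Y -> opn S X -> opn S Y.
Proof.
  intros HXY HX.
  replace Y with X; [exact HX |].
  apply functional_extensionality; intro x.
  apply propositional_extensionality, HXY.
Qed.

Lemma between_sym (X Y : set P) : between X Y -> between Y X.
Proof. intros [x [HX HY]]; exists x; split; assumption. Qed.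

(* The interior of any set is open: it is the union of the open sets it
   contains. *)
Lemma interior_open (R : set P) : opn S (interior S R).
Proof.
  apply (opn_set_eq (fun x => exists O, (opn S O /\ subset O R) /\ O x)).
  - intro x; unfold interior; split.
    + intros [O [[HO HOR] Hx]]; exists O; tauto.
    + intros [O [HO [HOR Hx]]]; exists O; tauto.
  - apply opn_union; intros O [HO _]; exact HO.
Qed.

Lemma transitive_intertwined (T : set P) (p q : P) :
  transitive S T -> T p -> T q -> intertwined S p q.
Proof.
  intros HT Hp Hq O O' HO HO' HOp HO'q.
  apply (HT O O' HO HO'); [exists p | exists q]; split; assumption.
Qed.

Lemma topen_nbhd_subset_K (p : P) (T : set P) :
  topen_nbhd S p T -> subset T (K S p).
Proof.
  intros [[_ [HoT HtT]] Hp] q Hq.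
  exists T; split; [exact HoT | split; [| exact Hq]].
  intros x Hx; exact (transitive_intertwined T p x HtT Hp Hx).
Qed.

Lemma transitive_of_dominated (X T : set P) :
  transitive S T ->
  (forall O, opn S O -> between O X -> between O T) ->
  transitive S X.
Proof.
  intros HT Hdom O O' HO HO' HOX HXO'.
  apply (HT O O' HO HO'); [exact (Hdom O HO HOX) |].
  apply between_sym, (Hdom O' HO'), between_sym, HXO'.
Qed.

Lemma between_K_open_nbhd (p : P) (T O : set P) :
  opn S T -> T p -> opn S O -> between O (K S p) -> between O T.
Proof.
  intros HoT Hp HO [a [HOa [U [_ [HUI HUa]]]]].
  apply between_sym, (HUI a HUa T O HoT HO Hp HOa).
Qed.

Lemma K_greatest_of_topen_nbhd (p : P) :
  (exists T, topen_nbhd S p T) -> greatest_topen_nbhd S p (K S p).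
Proof.
  intros [T HT].
  assert (HKp : K S p p) by (apply (topen_nbhd_subset_K p T HT); apply HT).
  destruct HT as [[_ [HoT HtT]] Hp].
  assert (HtK : transitive S (K S p)).
  { apply (transitive_of_dominated (K S p) T HtT).
    intros O HO; exact (between_K_open_nbhd p T O HoT Hp HO). }
  split; [| intros T'; apply topen_nbhd_subset_K].
  split; [| exact HKp].
  split; [exists p; exact HKp | split; [apply interior_open | exact HtK]].
Qed.

Lemma greatest_is_maximal (p : P) (T : set P) :
  greatest_topen_nbhd S p T -> maximal_topen_nbhd S p T.
Proof.
  intros [HT Hgreat]; split; [exact HT |].
  intros T' HT' HTT' x; split; [apply (Hgreat T' HT') | apply HTT'].
Qed.

End Regularity.

Theorem theorem4p12 (P : Type) (S : semitopology P) (p : P) :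
  (regular S p <-> greatest_topen_nbhd S p (K S p)) /\
  (greatest_topen_nbhd S p (K S p) <-> maximal_topen_nbhd S p (K S p)) /\
  (maximal_topen_nbhd S p (K S p) <-> exists T, maximal_topen_nbhd S p T) /\
  ((exists T, maximal_topen_nbhd S p T) <-> exists T, topen_nbhd S p T).
Proof.
  pose proof (K_greatest_of_topen_nbhd P S p) as Hgreatest.
  pose proof (greatest_is_maximal P S p (K S p)) as Hmaximal.
  assert (Hreg : regular S p <-> topen_nbhd S p (K S p)).
  { unfold regular, topen_nbhd; tauto. }
  split; [split | split; [split | split; split]].
  - intro H; apply Hgreatest; exists (K S p); apply Hreg, H.
  - intros [H _]; apply Hreg, H.
  - exact Hmaximal.
  - intros [H _]; apply Hgreatest; exists (K S p); exact H.
  - intro H; exists (K S p); exact H.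
  - intros [T [H _]]; apply Hmaximal, Hgreatest; exists T; exact H.
  - intros [T [H _]]; exists T; exact H.
  - intro H; exists (K S p); apply Hmaximal, Hgreatest, H.
Qed.
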